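(* In the setup below (arbitrary gauge), assume $p(\omega|x)>0$ for all $\omega\in\checkmark$ and that $\langle F_{\omega,x}\rangle=\langle F_{\Omega,x}\rangle\langle E_{\omega,x}\rangle$ for all $\omega\in\checkmark$. Then $$\sum_{\omega\in\checkmark}p(\omega|x)I(\sigma_{x|\omega})=4\big(\langle G_{\checkmark,x}\rangle-\langle F_{\Omega,x}\rangle\langle F_{\checkmark,x}\rangle\big),$$ and, whenever $I^Q>0$, the relative loss $\kappa:=1-\sum_{\omega\in\checkmark}p(\omega|x)I(\sigma_{x|\omega})/I^Q$ equals $$\kappa=\frac{\langle G_{\times,x}\rangle-\langle F_{\Omega,x}\rangle\langle F_{\times,x}\rangle}{\langle G_{\Omega,x}\rangle-\langle F_{\Omega,x}\rangle^2}.$$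
   Context: Setup: finite-dimensional $\mathcal H_S,\mathcal H_E$; unit vectors $|\psi_i\rangle\in\mathcal H_S$, $|\phi_i^E\rangle\in\mathcal H_E$; a $C^1$ family of unitaries $U_x^{SE}$ on $\mathcal H_S\otimes\mathcal H_E$; an orthonormal basis $\{|\pi_\omega^E\rangle\}_{\omega\in\Omega}$ of $\mathcal H_E$, $\Omega=\checkmark\sqcup\times$. $|\Psi_x^{SE}\rangle=U_x^{SE}(|\psi_i\rangle\otimes|\phi_i^E\rangle)$, $M_{\omega,x}=\langle\pi_\omega^E|U_x^{SE}|\phi_i^E\rangle$, $|\tilde\psi_{x|\omega}\rangle=M_{\omega,x}|\psi_i\rangle$, $p(\omega|x)=\|\tilde\psi_{x|\omega}\|^2$, $\sigma_{x|\omega}=|\tilde\psi_{x|\omega}\rangle\langle\tilde\psi_{x|\omega}|/p(\omega|x)$. QFI of a normalized pure state: $I(|\phi_x\rangle)=4(\langle\partial_x\phi_x|\partial_x\phi_x\rangle-|\langle\phi_x|\partial_x\phi_x\rangle|^2)$; $I^Q=I(|\Psi_x^{SE}\rangle)$. Define $E_{\omega,x}=M_{\omega,x}^\dagger M_{\omega,x}$, $F_{\omega,x}=i\,\partial_xM_{\omega,x}^\dagger M_{\omega,x}$, $G_{\omega,x}=\partial_xM_{\omega,x}^\dagger\partial_xM_{\omega,x}$, and for $S\subseteq\Omega$, $X_{S,x}=\sum_{\omega\in S}X_{\omega,x}$. $\langle A\rangle=\langle\psi_i|A|\psi_i\rangle$. *)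

From HB Require Import structures.
From mathcomp Require Import all_boot all_order all_algebra.
From mathcomp Require Import all_classical all_reals all_analysis.
From mathcomp Require Import complex mxtens.
Set Implicit Arguments.
Unset Strict Implicit.
Unset Printing Implicit Defensive.
Import Order.TTheory GRing.Theory Num.Theory.
Import numFieldNormedType.Exports.
Local Open Scope ring_scope.

Section QDefs.
Variable R : realType.
Local Notation C := R[i].

Definition adjmx (p q : nat) (A : 'M[C]_(p, q)) : 'M[C]_(q, p) :=
  (map_mx Num.conj A)^T.

Definition inner (k : nat) (a b : 'cV[C]_k) : C := (adjmx a *m b) 0 0.

Definition cderivable (f : R -> C) (x : R) : Prop :=
  derivable (fun t => complex.Re (f t)) x 1 /\
  derivable (fun t => complex.Im (f t)) x 1.

Definition cderive (f : R -> C) (x : R) : C :=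
  Complex (derive1 (fun t => complex.Re (f t)) x)
          (derive1 (fun t => complex.Im (f t)) x).

Definition mderive (p q : nat) (A : R -> 'M[C]_(p, q)) (x : R) : 'M[C]_(p, q) :=
  \matrix_(i, j) cderive (fun t => A t i j) x.

Definition C1_family (p q : nat) (A : R -> 'M[C]_(p, q)) : Prop :=
  forall i j,
    (forall t, cderivable (fun s => A s i j) t) /\
    continuous (fun t : R => derive1 (fun s => complex.Re (A s i j)) t) /\
    continuous (fun t : R => derive1 (fun s => complex.Im (A s i j)) t).

Definition QFI (k : nat) (phi : R -> 'cV[C]_k) (x : R) : C :=
  let dphi := mderive phi x in
  4 * (inner dphi dphi - `|inner (phi x) dphi| ^+ 2).

Section Setup.
Variables (n m : nat).
Variable (psi : 'cV[C]_n) (phiE : 'cV[C]_m).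
Variable (U : R -> 'M[C]_(n * m)).
(* orthonormal basis {|pi_w>} of H_E : the columns of P (w : 'I_m) *)
Variable (P : 'M[C]_m).

Definition pivec (w : 'I_m) : 'cV[C]_m := col w P.

Definition PsiSE (x : R) : 'cV[C]_(n * m) :=
  U x *m castmx (erefl, muln1 1) (psi *t phiE).

(* M_{w,x} = <pi_w^E| U_x |phi^E>  (operator on H_S) *)
Definition Mop (w : 'I_m) (x : R) : 'M[C]_n :=
  castmx (muln1 n, muln1 n)
    ((1%:M *t adjmx (pivec w)) *m U x *m (1%:M *t phiE)).

Definition psitilde (w : 'I_m) (x : R) : 'cV[C]_n := Mop w x *m psi.

Definition prob (w : 'I_m) (x : R) : C := inner (psitilde w x) (psitilde w x).

(* normalized pure state representing sigma_{x|w} *)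
Definition sigmavec (w : 'I_m) (x : R) : 'cV[C]_n :=
  (sqrtC (prob w x))^-1 *: psitilde w x.

Definition Eop (w : 'I_m) (x : R) : 'M[C]_n := adjmx (Mop w x) *m Mop w x.
Definition Fop (w : 'I_m) (x : R) : 'M[C]_n :=
  'i *: (adjmx (mderive (Mop w) x) *m Mop w x).
Definition Gop (w : 'I_m) (x : R) : 'M[C]_n :=
  adjmx (mderive (Mop w) x) *m mderive (Mop w) x.

Definition sumS (X : 'I_m -> R -> 'M[C]_n) (S : {set 'I_m}) (x : R) : 'M[C]_n :=
  \sum_(w in S) X w x.

Definition expect (A : 'M[C]_n) : C := (adjmx psi *m A *m psi) 0 0.

End Setup.
End QDefs.

(* Let Psi be the joint state and psitilde_w = M_w psi = (<pi_w| (x) 1) Psi.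
   Completeness of the basis {pi_w} gives <G_Omega> = <dPsi|dPsi> and
   <F_Omega> = i <dPsi|Psi>, which is real because |Psi| is constant; hence
   I^Q = 4 (<G_Omega> - <F_Omega>^2).  For a single outcome, differentiating
   the normalised state psitilde_w / sqrt p_w gives
   p_w I(sigma_w) = 4 (<G_w> - |<F_w>|^2 / p_w), and the hypothesis
   <F_w> = <F_Omega> p_w turns the correction into <F_Omega> <F_w>.
   Summing over the good outcomes and splitting Omega into good and bad
   outcomes gives the formula for kappa. *)

From HB Require Import structures.
From mathcomp Require Import all_boot all_order all_algebra.
From mathcomp Require Import all_classical all_reals all_analysis.
From mathcomp Require Import complex mxtens.
From mathcomp Require Import ring lra.
Import Order.TTheory GRing.Theory Num.Theory.
Import numFieldNormedType.Exports.
Local Open Scope ring_scope.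

Section ComplexDerivative.
Local Set Implicit Arguments.
Local Unset Strict Implicit.
Variable R : realType.
Local Notation C := R[i].

Lemma ReD (a b : C) : complex.Re (a + b) = complex.Re a + complex.Re b.
Proof. by case: a; case: b. Qed.
Lemma ImD (a b : C) : complex.Im (a + b) = complex.Im a + complex.Im b.
Proof. by case: a; case: b. Qed.
Lemma ReM (a b : C) :
  complex.Re (a * b) = complex.Re a * complex.Re b - complex.Im a * complex.Im b.
Proof. by case: a; case: b. Qed.
Lemma ImM (a b : C) :
  complex.Im (a * b) = complex.Re a * complex.Im b + complex.Im a * complex.Re b.
Proof. by case: a; case: b. Qed.
Lemma ReJ (a : C) : complex.Re (a^*) = complex.Re a. Proof. by case: a. Qed.
Lemma ImJ (a : C) : complex.Im (a^*) = - complex.Im a. Proof. by case: a. Qed.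

Definition is_cderive (f : R -> C) (x : R) (d : C) :=
  is_derive x 1 (fun t => complex.Re (f t)) (complex.Re d) /\
  is_derive x 1 (fun t => complex.Im (f t)) (complex.Im d).

Lemma is_cderive_val f x d : is_cderive f x d -> cderive f x = d.
Proof. by case=> H1 H2; rewrite /cderive !derive1E !derive_val; case: d {H1 H2}. Qed.

Lemma cderivableP f x : cderivable f x -> is_cderive f x (cderive f x).
Proof. by case=> H1 H2; split; rewrite /cderive /= derive1E; apply: derivableP. Qed.

Lemma eq_is_cderive f g x d d' :
  is_cderive f x d -> f = g -> d = d' -> is_cderive g x d'.
Proof. by move=> ? <- <-. Qed.

Lemma is_cderive_cst (c : C) x : is_cderive (fun _ => c) x 0.
Proof. by split; apply: is_derive_cst. Qed.

Lemma is_cderiveD f g x a b : is_cderive f x a -> is_cderive g x b ->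
  is_cderive (fun t => f t + g t) x (a + b).
Proof.
case=> Hf1 Hf2 [Hg1 Hg2]; split.
  have -> : (fun t => complex.Re (f t + g t)) =
    (fun t => complex.Re (f t)) + (fun t => complex.Re (g t)).
    by apply/funext => t /=; rewrite ReD.
  by rewrite ReD; apply: is_deriveD.
have -> : (fun t => complex.Im (f t + g t)) =
  (fun t => complex.Im (f t)) + (fun t => complex.Im (g t)).
  by apply/funext => t /=; rewrite ImD.
by rewrite ImD; apply: is_deriveD.
Qed.

Lemma is_cderiveM f g x a b : is_cderive f x a -> is_cderive g x b ->
  is_cderive (fun t => f t * g t) x (a * g x + f x * b).
Proof.
case=> Hf1 Hf2 [Hg1 Hg2]; split.
  have -> : (fun t => complex.Re (f t * g t)) =
    (fun t => complex.Re (f t)) * (fun t => complex.Re (g t)) -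
    (fun t => complex.Im (f t)) * (fun t => complex.Im (g t)).
    by apply/funext => t /=; rewrite ReM.
  by apply: is_derive_eq; rewrite ReD !ReM /= /GRing.scale /=; lra.
have -> : (fun t => complex.Im (f t * g t)) =
  (fun t => complex.Re (f t)) * (fun t => complex.Im (g t)) +
  (fun t => complex.Im (f t)) * (fun t => complex.Re (g t)).
  by apply/funext => t /=; rewrite ImM.
by apply: is_derive_eq; rewrite ImD !ImM /= /GRing.scale /=; lra.
Qed.

Lemma is_cderiveJ f x a : is_cderive f x a -> is_cderive (fun t => (f t)^*) x a^*.
Proof.
case=> H1 H2; split.
  have -> : (fun t => complex.Re ((f t)^*)) = (fun t => complex.Re (f t)).
    by apply/funext => t; rewrite ReJ.
  by rewrite ReJ.
have -> : (fun t => complex.Im ((f t)^*)) = - (fun t => complex.Im (f t)).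
  by apply/funext => t /=; rewrite ImJ.
by rewrite ImJ; apply: is_deriveN.
Qed.

Lemma is_cderive_sum (I : Type) (r : seq I) (P : pred I) (F : I -> R -> C)
    (dF : I -> C) x :
  (forall i, P i -> is_cderive (F i) x (dF i)) ->
  is_cderive (fun t => \sum_(i <- r | P i) F i t) x (\sum_(i <- r | P i) dF i).
Proof.
move=> HF; elim: r => [|a r IH].
  apply: eq_is_cderive (is_cderive_cst 0 x) _ _; last by rewrite big_nil.
  by apply/funext => t; rewrite big_nil.
case Pa: (P a).
  apply: eq_is_cderive (is_cderiveD (HF a Pa) IH) _ _; last by rewrite big_cons Pa.
  by apply/funext => t; rewrite big_cons Pa.
apply: eq_is_cderive IH _ _; last by rewrite big_cons Pa.
by apply/funext => t; rewrite big_cons Pa.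
Qed.

Lemma sqrtC_realE (r : R) : 0 <= r -> sqrtC (r%:C%C) = (Num.sqrt r)%:C%C.
Proof.
move=> r0.
have -> : r%:C%C = ((Num.sqrt r)%:C%C) ^+ 2 :> C by rewrite -rmorphXn /= sqr_sqrtr.
by rewrite sqrCK // lecR sqrtr_ge0.
Qed.

Lemma invsqrtC_ge0 (q : C) : 0 <= q ->
  (sqrtC q)^-1 = ((Num.sqrt (complex.Re q))^-1)%:C%C.
Proof.
move=> q0; rewrite -[in LHS](RRe_real (ger0_real q0)) sqrtC_realE.
  by rewrite -fmorphV.
by move: q0; rewrite lecE => /andP[].
Qed.

(* The derivative is real since [(sqrtC (f t))^-1] is real for nonnegative [f t]. *)
Lemma is_cderive_invsqrt (f : R -> C) x d :
  is_cderive f x d -> (forall t, 0 <= f t) -> 0 < f x ->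
  exists dc : R, is_cderive (fun t => (sqrtC (f t))^-1) x dc%:C%C.
Proof.
move=> [Hg _] Hnn Hpos.
have Hre : 0 < complex.Re (f x) by move: Hpos; rewrite ltcE => /andP[].
have Hs := is_derive1_comp (is_derive1_sqrt Hre) Hg.
have Hnz : (Num.sqrt \o (fun t => complex.Re (f t))) x != 0.
  by rewrite /= gt_eqF // sqrtr_gt0.
have Hd := derivableV Hnz (@ex_derive _ _ _ _ _ _ _ Hs).
have Hfun : (fun t => complex.Re ((sqrtC (f t))^-1)) =
            (fun t => ((Num.sqrt \o (fun t => complex.Re (f t))) t)^-1).
  by apply/funext => t; rewrite invsqrtC_ge0.
exists ('D_1 (fun t => ((Num.sqrt \o (fun t => complex.Re (f t))) t)^-1) x); split.
  by rewrite Hfun /=; apply: derivableP.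
have -> : (fun t => complex.Im ((sqrtC (f t))^-1)) = cst 0.
  by apply/funext => t; rewrite invsqrtC_ge0.
exact: is_derive_cst.
Qed.
End ComplexDerivative.

Section MatrixCalculus.
Local Set Implicit Arguments.
Local Unset Strict Implicit.
Variable R : realType.
Local Notation C := R[i].

Definition is_mderive (p q : nat) (V : R -> 'M[C]_(p, q)) (x : R) (D : 'M[C]_(p, q)) :=
  forall i j, is_cderive (fun t => V t i j) x (D i j).

Lemma is_mderive_val p q (V : R -> 'M[C]_(p, q)) x D :
  is_mderive V x D -> mderive V x = D.
Proof. by move=> HV; apply/matrixP => i j; rewrite mxE (is_cderive_val (HV i j)). Qed.

Lemma C1_family_is_mderive p q (V : R -> 'M[C]_(p, q)) x :
  C1_family V -> is_mderive V x (mderive V x).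
Proof. by move=> HV i j; rewrite mxE; apply: cderivableP; case: (HV i j) => + _; apply. Qed.

Lemma eq_is_mderive p q (V W : R -> 'M[C]_(p, q)) x D D' :
  is_mderive V x D -> V = W -> D = D' -> is_mderive W x D'.
Proof. by move=> ? <- <-. Qed.

Lemma is_mderive_cst p q (A : 'M[C]_(p, q)) x : is_mderive (fun _ => A) x 0.
Proof. by move=> i j; rewrite mxE; apply: is_cderive_cst. Qed.

Lemma is_mderive_mulmx p q r (A : R -> 'M[C]_(p, q)) (B : R -> 'M[C]_(q, r)) x dA dB :
  is_mderive A x dA -> is_mderive B x dB ->
  is_mderive (fun t => A t *m B t) x (dA *m B x + A x *m dB).
Proof.
move=> HA HB i j; apply: eq_is_cderive.
- apply: (is_cderive_sum (index_enum 'I_q) (P := xpredT)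
     (F := fun k t => A t i k * B t k j)) => k _.
  exact: is_cderiveM.
- by apply/funext => t; rewrite mxE.
- by rewrite !mxE -big_split; apply: eq_bigr.
Qed.

Lemma is_mderive_mulmxr p q r (A : R -> 'M[C]_(p, q)) (B : 'M[C]_(q, r)) x dA :
  is_mderive A x dA -> is_mderive (fun t => A t *m B) x (dA *m B).
Proof.
move=> HA; apply: eq_is_mderive (is_mderive_mulmx HA (is_mderive_cst B x)) _ _ => //.
by rewrite mulmx0 addr0.
Qed.

Lemma is_mderiveZ p q (c : R -> C) (V : R -> 'M[C]_(p, q)) x dc D :
  is_cderive c x dc -> is_mderive V x D ->
  is_mderive (fun t => c t *: V t) x (dc *: V x + c x *: D).
Proof.
move=> Hc HV i j; apply: eq_is_cderive (is_cderiveM Hc (HV i j)) _ _.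
  by apply/funext => t; rewrite mxE.
by rewrite !mxE.
Qed.

Lemma is_mderive_adj p q (V : R -> 'M[C]_(p, q)) x D :
  is_mderive V x D -> is_mderive (fun t => adjmx (V t)) x (adjmx D).
Proof.
move=> HV i j; apply: eq_is_cderive (is_cderiveJ (HV j i)) _ _.
  by apply/funext => t; rewrite !mxE.
by rewrite !mxE.
Qed.

Lemma is_mderive_cast p q p' q' (e : (p = p') * (q = q')) (V : R -> 'M[C]_(p, q)) x D :
  is_mderive V x D -> is_mderive (fun t => castmx e (V t)) x (castmx e D).
Proof.
move=> HV i j.
apply: eq_is_cderive (HV (cast_ord (esym e.1) i) (cast_ord (esym e.2) j)) _ _.
  by apply/funext => t; rewrite castmxE.
by rewrite castmxE.
Qed.

End MatrixCalculus.

Section InnerProduct.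
Local Set Implicit Arguments.
Local Unset Strict Implicit.
Variable R : realType.
Local Notation C := R[i].

Lemma adjmxM p q r (A : 'M[C]_(p, q)) (B : 'M[C]_(q, r)) :
  adjmx (A *m B) = adjmx B *m adjmx A.
Proof. by rewrite /adjmx map_mxM trmx_mul. Qed.

Lemma adjmxK p q (A : 'M[C]_(p, q)) : adjmx (adjmx A) = A.
Proof. by apply/matrixP => i j; rewrite !mxE conjCK. Qed.

Lemma adjmx1 p : adjmx (1%:M : 'M[C]_p) = 1%:M.
Proof. by apply/matrixP => i j; rewrite !mxE rmorph_nat eq_sym. Qed.

Lemma adjmx_tens p q p' q' (A : 'M[C]_(p, q)) (B : 'M[C]_(p', q')) :
  adjmx (A *t B) = adjmx A *t adjmx B.
Proof. by rewrite /adjmx map_mxT trmx_tens. Qed.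

Lemma innerE k (a b : 'cV[C]_k) : inner a b = \sum_i (a i 0)^* * b i 0.
Proof. by rewrite /inner mxE; apply: eq_bigr => i _; rewrite !mxE. Qed.

Lemma inner_adj p q (A : 'M[C]_(p, q)) a b : inner (A *m a) b = inner a (adjmx A *m b).
Proof. by rewrite /inner adjmxM mulmxA. Qed.

Lemma innerC k (a b : 'cV[C]_k) : inner b a = (inner a b)^*.
Proof.
rewrite !innerE rmorph_sum; apply: eq_bigr => i _.
by rewrite rmorphM /= conjCK mulrC.
Qed.

Lemma innerZl k c (a b : 'cV[C]_k) : inner (c *: a) b = c^* * inner a b.
Proof.
rewrite !innerE mulr_sumr; apply: eq_bigr => i _.
by rewrite mxE rmorphM mulrA.
Qed.

Lemma innerZr k c (a b : 'cV[C]_k) : inner a (c *: b) = c * inner a b.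
Proof.
rewrite !innerE mulr_sumr; apply: eq_bigr => i _.
by rewrite mxE mulrCA.
Qed.

Lemma innerDl k (a a' b : 'cV[C]_k) : inner (a + a') b = inner a b + inner a' b.
Proof.
rewrite !innerE -big_split; apply: eq_bigr => i _.
by rewrite mxE rmorphD mulrDl.
Qed.

Lemma innerDr k (a b b' : 'cV[C]_k) : inner a (b + b') = inner a b + inner a b'.
Proof.
rewrite !innerE -big_split; apply: eq_bigr => i _.
by rewrite mxE mulrDr.
Qed.

Lemma inner_sumr k (I : Type) (r : seq I) (P : pred I) (a : 'cV[C]_k)
    (F : I -> 'cV[C]_k) :
  inner a (\sum_(i <- r | P i) F i) = \sum_(i <- r | P i) inner a (F i).
Proof. by rewrite /inner mulmx_sumr summxE. Qed.

Lemma inner_cast k k' (e : k = k') (a b : 'cV[C]_k) :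
  inner (castmx (e, erefl) a) (castmx (e, erefl) b) = inner a b.
Proof. by case: k' / e; rewrite !castmx_id. Qed.

Lemma inner_ge0 k (a : 'cV[C]_k) : 0 <= inner a a.
Proof.
rewrite innerE; apply: sumr_ge0 => i _.
by rewrite mulrC -normCK exprn_ge0.
Qed.

Lemma is_cderive_inner k (a b : R -> 'cV[C]_k) x da db :
  is_mderive a x da -> is_mderive b x db ->
  is_cderive (fun t => inner (a t) (b t)) x (inner da (b x) + inner (a x) db).
Proof. by move=> Ha Hb; have := is_mderive_mulmx (is_mderive_adj Ha) Hb 0 0; rewrite mxE. Qed.

Lemma inner_deriv_const_norm k (v : R -> 'cV[C]_k) x dv :
  is_mderive v x dv -> (forall t, inner (v t) (v t) = inner (v x) (v x)) ->
  inner dv (v x) + inner (v x) dv = 0.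
Proof.
move=> Hv Hconst; have := is_cderive_inner Hv Hv.
have -> : (fun t => inner (v t) (v t)) = (fun=> inner (v x) (v x)).
  by apply/funext => t; rewrite Hconst.
move/is_cderive_val <-; exact/is_cderive_val/is_cderive_cst.
Qed.

Lemma expect_adj k n (psi : 'cV[C]_n) (A B : 'M[C]_(k, n)) :
  expect psi (adjmx A *m B) = inner (A *m psi) (B *m psi).
Proof. by rewrite /expect /inner adjmxM !mulmxA. Qed.

Lemma expectZ n (psi : 'cV[C]_n) c (A : 'M[C]_n) :
  expect psi (c *: A) = c * expect psi A.
Proof. by rewrite /expect -scalemxAr -scalemxAl mxE. Qed.

Lemma expect_sum n (psi : 'cV[C]_n) (I : Type) (r : seq I) (P : pred I)
    (F : I -> 'M[C]_n) :
  expect psi (\sum_(i <- r | P i) F i) = \sum_(i <- r | P i) expect psi (F i).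
Proof. by rewrite /expect mulmx_sumr mulmx_suml summxE. Qed.

End InnerProduct.

Section Normalization.
Local Set Implicit Arguments.
Local Unset Strict Implicit.
Variable R : realType.
Local Notation C := R[i].

Lemma QFI_normalize k (v : R -> 'cV[C]_k) x dv :
  is_mderive v x dv -> 0 < inner (v x) (v x) ->
  inner (v x) (v x) * QFI (fun t => (sqrtC (inner (v t) (v t)))^-1 *: v t) x
  = 4 * (inner dv dv - `|inner (v x) dv| ^+ 2 / inner (v x) (v x)).
Proof.
move=> Hv p_gt0.
have [dc Hc] :=
  is_cderive_invsqrt (is_cderive_inner Hv Hv) (fun t => inner_ge0 (v t)) p_gt0.
rewrite /QFI (is_mderive_val (is_mderiveZ Hc Hv)) /=.
set p := inner (v x) (v x) in p_gt0 *; set c := (sqrtC p)^-1.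
have sqrtp_gt0 : 0 < sqrtC p by rewrite sqrtC_gt0.
have cJ : c^* = c by apply/conj_Creal; rewrite realV; apply/ger0_real/ltW.
have c_neq0 : c != 0 by rewrite invr_eq0 gt_eqF.
have pE : p = (c ^+ 2)^-1 by rewrite exprVn invrK sqrtCK.
rewrite !normCK -!innerC.
have dcJ : (dc%:C%C)^* = dc%:C%C := conjc_real dc.
rewrite !(innerDl, innerDr, innerZl, innerZr) cJ dcJ -/p pE.
by field.
Qed.

End Normalization.

Section MeasurementModel.
Local Set Implicit Arguments.
Local Unset Strict Implicit.
Variable R : realType.
Local Notation C := R[i].

Lemma castmx_id2 p q (e1 : p = p) (e2 : q = q) (A : 'M[C]_(p, q)) :
  castmx (e1, e2) A = A.
Proof. by rewrite (eq_irrelevance e1 erefl) (eq_irrelevance e2 erefl) castmx_id. Qed.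

Lemma castmx_mulmx_col k l (e : k = l) (X : 'M[C]_k) (y : 'cV[C]_l) :
  castmx (e, e) X *m y = castmx (e, erefl) (X *m castmx (esym e, erefl) y).
Proof. by case: l / e in y *; rewrite !castmx_id. Qed.

Lemma tensmx_sumr p q p' q' (A : 'M[C]_(p, q)) (I : Type) (r : seq I) (P : pred I)
    (F : I -> 'M[C]_(p', q')) :
  A *t (\sum_(i <- r | P i) F i) = \sum_(i <- r | P i) (A *t F i).
Proof.
apply/matrixP => i j; rewrite summxE !mxE summxE mulr_sumr.
by apply: eq_bigr => k _; rewrite !mxE.
Qed.

Lemma tensmx11 p q : (1%:M : 'M[C]_p) *t (1%:M : 'M[C]_q) = 1%:M.
Proof.
apply/matrixP => i j.
case: (mxtens_indexP i) => i0 i1; case: (mxtens_indexP j) => j0 j1.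
rewrite tensmxE !mxE (inj_eq (can_inj (@mxtens_indexK p q))) xpair_eqE.
by case: (i0 == j0); case: (i1 == j1); rewrite /= ?mulr1 ?mulr0 ?mul0r.
Qed.

Variables (n m : nat) (psi : 'cV[C]_n) (phiE : 'cV[C]_m) (P : 'M[C]_m).

Definition outcome_proj (w : 'I_m) : 'M[C]_(n * 1, n * m) := 1%:M *t adjmx (pivec P w).

Definition input_state : 'cV[C]_(n * m) := castmx (erefl, muln1 1) (psi *t phiE).

(* [branch V w] is (<pi_w| (x) 1) V (psi (x) phiE); for V = U_x it is M_w psi. *)
Definition branch (V : 'M[C]_(n * m)) (w : 'I_m) : 'cV[C]_n :=
  castmx (muln1 n, erefl) (outcome_proj w *m (V *m input_state)).

Lemma sandwich_mulmx_psi w (V : 'M[C]_(n * m)) :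
  castmx (muln1 n, muln1 n) (outcome_proj w *m V *m (1%:M *t phiE)) *m psi
  = branch V w.
Proof.
rewrite castmx_mulmx_col; congr castmx; rewrite -!mulmxA; congr (_ *m (_ *m _)).
have -> : castmx (esym (muln1 n), erefl) psi = psi *t (1%:M : 'M[C]_1).
  by rewrite tens_mx_scalar scale1r (eq_irrelevance (esym (muln1 1%N)) erefl).
by rewrite (tensmx_mul 1%:M phiE psi 1%:M) mul1mx mulmx1 /input_state castmx_id2.
Qed.

Lemma sum_outcome_proj : adjmx P *m P = 1%:M ->
  \sum_w adjmx (outcome_proj w) *m outcome_proj w = 1%:M.
Proof.
move=> /mulmx1C HP.
transitivity ((1%:M : 'M[C]_n) *t \sum_w (pivec P w *m adjmx (pivec P w))).
  rewrite tensmx_sumr; apply: eq_bigr => w _.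
  by rewrite /outcome_proj adjmx_tens adjmx1 adjmxK tensmx_mul mul1mx.
have -> : \sum_w (pivec P w *m adjmx (pivec P w)) = P *m adjmx P.
  apply/matrixP => i j; rewrite summxE !mxE; apply: eq_bigr => w _.
  by rewrite !mxE big_ord1 !mxE.
by rewrite HP tensmx11.
Qed.

Lemma sum_inner_branch (V W : 'M[C]_(n * m)) : adjmx P *m P = 1%:M ->
  \sum_w inner (branch V w) (branch W w) = inner (V *m input_state) (W *m input_state).
Proof.
move=> HP; under eq_bigr do rewrite inner_cast inner_adj.
rewrite -inner_sumr; congr inner.
rewrite -[RHS]mul1mx -(sum_outcome_proj HP) mulmx_suml.
by apply: eq_bigr => w _; rewrite mulmxA.
Qed.

End MeasurementModel.

Section Outcomes.
Local Set Implicit Arguments.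
Local Unset Strict Implicit.
Variable R : realType.
Local Notation C := R[i].
Variables (n m : nat) (psi : 'cV[C]_n) (phiE : 'cV[C]_m) (U : R -> 'M[C]_(n * m))
  (P : 'M[C]_m) (x : R).

Local Notation dU := (mderive U x).
Local Notation Psi0 := (input_state psi phiE).
Local Notation branch := (branch psi phiE P).
Local Notation FOm := (expect psi (sumS (Fop phiE U P) [set: 'I_m] x)).

Lemma expect_sumS (X : 'I_m -> R -> 'M[C]_n) S :
  expect psi (sumS X S x) = \sum_(w in S) expect psi (X w x).
Proof. by rewrite /sumS expect_sum. Qed.

Lemma expect_sumS_setC (X : 'I_m -> R -> 'M[C]_n) S :
  expect psi (sumS X (~: S) x)
  = expect psi (sumS X [set: 'I_m] x) - expect psi (sumS X S x).
Proof.
rewrite !expect_sumS [in RHS](big_setID S) /=.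
by rewrite finset.setTI finset.setTD addrAC subrr add0r.
Qed.

Lemma psitildeE w t : psitilde psi phiE U P w t = branch (U t) w.
Proof. exact: sandwich_mulmx_psi. Qed.

Lemma probE w : prob psi phiE U P w x = inner (branch (U x) w) (branch (U x) w).
Proof. by rewrite /prob psitildeE. Qed.

Lemma expect_Eop w : expect psi (Eop phiE U P w x) = prob psi phiE U P w x.
Proof. exact: expect_adj. Qed.

Hypothesis U_C1 : C1_family U.

Lemma is_mderive_Mop w : is_mderive (Mop phiE U P w) x
  (castmx (muln1 n, muln1 n) (outcome_proj n P w *m dU *m (1%:M *t phiE))).
Proof.
have HU := C1_family_is_mderive x U_C1.
apply: eq_is_mderive (is_mderive_cast (muln1 n, muln1 n)
  (is_mderive_mulmxr (1%:M *t phiE)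
     (is_mderive_mulmx (is_mderive_cst (outcome_proj n P w) x) HU))) _ _ => //.
by rewrite mul0mx add0r.
Qed.

Lemma is_mderive_psitilde w : is_mderive (psitilde psi phiE U P w) x (branch dU w).
Proof.
apply: eq_is_mderive (is_mderive_mulmxr psi (is_mderive_Mop w)) _ _ => //.
exact: sandwich_mulmx_psi.
Qed.

Lemma is_mderive_PsiSE : is_mderive (PsiSE psi phiE U) x (dU *m Psi0).
Proof. exact/is_mderive_mulmxr/C1_family_is_mderive. Qed.

Lemma expect_Gop w :
  expect psi (Gop phiE U P w x) = inner (branch dU w) (branch dU w).
Proof. by rewrite /Gop expect_adj (is_mderive_val (is_mderive_Mop w)) sandwich_mulmx_psi. Qed.

Lemma expect_Fop w :
  expect psi (Fop phiE U P w x) = 'i * inner (branch dU w) (branch (U x) w).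
Proof.
rewrite /Fop expectZ expect_adj (is_mderive_val (is_mderive_Mop w)).
by rewrite !sandwich_mulmx_psi.
Qed.

Lemma prob_QFI_sigmavec w : 0 < prob psi phiE U P w x ->
  prob psi phiE U P w x * QFI (sigmavec psi phiE U P w) x
  = 4 * (expect psi (Gop phiE U P w x)
         - `|expect psi (Fop phiE U P w x)| ^+ 2 / prob psi phiE U P w x).
Proof.
move=> p_gt0; apply: etrans (QFI_normalize (is_mderive_psitilde w) p_gt0) _.
rewrite !psitildeE expect_Gop expect_Fop normrM normCi mul1r.
by rewrite [inner (branch dU w) (branch (U x) w)]innerC norm_conjC probE.
Qed.

Hypothesis P_unitary : adjmx P *m P = 1%:M.

Lemma expect_Gop_total :
  expect psi (sumS (Gop phiE U P) [set: 'I_m] x) = inner (dU *m Psi0) (dU *m Psi0).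
Proof.
rewrite expect_sumS; under eq_bigl do rewrite finset.in_setT.
under eq_bigr do rewrite expect_Gop; exact: sum_inner_branch.
Qed.

Lemma expect_Fop_total : FOm = 'i * inner (dU *m Psi0) (U x *m Psi0).
Proof.
rewrite expect_sumS; under eq_bigl do rewrite finset.in_setT.
by under eq_bigr do rewrite expect_Fop; rewrite -mulr_sumr sum_inner_branch.
Qed.

Hypothesis U_unitary : forall t, adjmx (U t) *m U t = 1%:M.

(* The norm of [PsiSE] is constant, so [<dPsi|Psi>] is purely imaginary. *)
Lemma inner_dPsi_PsiJ :
  (inner (dU *m Psi0) (U x *m Psi0))^* = - inner (dU *m Psi0) (U x *m Psi0).
Proof.
have norm_const t : inner (PsiSE psi phiE U t) (PsiSE psi phiE U t)
                    = inner (PsiSE psi phiE U x) (PsiSE psi phiE U x).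
  by rewrite /PsiSE !inner_adj !mulmxA !U_unitary !mul1mx.
have := inner_deriv_const_norm is_mderive_PsiSE norm_const.
by move/eqP; rewrite addrC addr_eq0 -innerC => /eqP.
Qed.

Lemma Fop_total_real : FOm^* = FOm.
Proof. by rewrite expect_Fop_total rmorphM /= conjCi inner_dPsi_PsiJ mulrNN. Qed.

Lemma QFI_PsiSE : QFI (PsiSE psi phiE U) x
  = 4 * (expect psi (sumS (Gop phiE U P) [set: 'I_m] x) - FOm ^+ 2).
Proof.
rewrite /QFI (is_mderive_val is_mderive_PsiSE) expect_Gop_total expect_Fop_total /=.
rewrite normCK /PsiSE -/(input_state psi phiE) -innerC.
rewrite [inner (U x *m _) _]innerC inner_dPsi_PsiJ exprMn sqrCi; ring.
Qed.

End Outcomes.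

Theorem mainTheorem4 (R : realType) (n m : nat)
  (psi : 'cV[R[i]]_n) (phiE : 'cV[R[i]]_m)
  (U : R -> 'M[R[i]]_(n * m)) (P : 'M[R[i]]_m)
  (Good : {set 'I_m}) (x : R) :
  inner psi psi = 1 ->
  inner phiE phiE = 1 ->
  (forall t, adjmx (U t) *m U t = 1%:M) ->
  C1_family U ->
  adjmx P *m P = 1%:M ->
  (forall w, w \in Good -> 0 < prob psi phiE U P w x) ->
  (forall w, w \in Good ->
     expect psi (Fop phiE U P w x)
     = expect psi (sumS (Fop phiE U P) [set: 'I_m] x)
       * expect psi (Eop phiE U P w x)) ->
  let FOm := expect psi (sumS (Fop phiE U P) [set: 'I_m] x) in
  let IQ := QFI (PsiSE psi phiE U) x in
  let Isum := \sum_(w in Good)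
                prob psi phiE U P w x * QFI (sigmavec psi phiE U P w) x in
  Isum = 4 * (expect psi (sumS (Gop phiE U P) Good x)
              - FOm * expect psi (sumS (Fop phiE U P) Good x))
  /\
  (0 < IQ ->
   1 - Isum / IQ
   = (expect psi (sumS (Gop phiE U P) (~: Good) x)
      - FOm * expect psi (sumS (Fop phiE U P) (~: Good) x))
     / (expect psi (sumS (Gop phiE U P) [set: 'I_m] x) - FOm ^+ 2)).
Proof.
move=> _ _ U_unitary U_C1 P_unitary p_gt0 F_factor FOm IQ Isum.
have FOmJ : FOm^* = FOm := Fop_total_real psi phiE x U_C1 P_unitary U_unitary.
have IsumE : Isum = 4 * (expect psi (sumS (Gop phiE U P) Good x)
                         - FOm * expect psi (sumS (Fop phiE U P) Good x)).
  rewrite /Isum !expect_sumS mulr_sumr -sumrB mulr_sumr; apply: eq_bigr => w wG.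
  rewrite prob_QFI_sigmavec ?p_gt0 // F_factor // expect_Eop.
  have p_neq0 := lt0r_neq0 (p_gt0 w wG).
  rewrite normrM (ger0_norm (ltW (p_gt0 w wG))) exprMn normCK -/FOm FOmJ.
  by field.
split=> // IQ_gt0.
have IQE : IQ = 4 * (expect psi (sumS (Gop phiE U P) [set: 'I_m] x) - FOm ^+ 2).
  exact: QFI_PsiSE.
have den_neq0 : expect psi (sumS (Gop phiE U P) [set: 'I_m] x) - FOm ^+ 2 != 0.
  by move: (lt0r_neq0 IQ_gt0); rewrite IQE mulf_eq0 negb_or => /andP[].
by rewrite IsumE IQE !expect_sumS_setC -/FOm; field.
Qed.
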